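(* Let $d,n\ge 1$ and let $\mathbf{X},\mathbf{X}'\in\mathbb{R}^{d\times n}$ be neighboring datasets all of whose columns lie in $\mathcal{B}_d$. Let $\mathbf{\Lambda}=\mathrm{diag}(\lambda_1,\dots,\lambda_d)$ and $\mathbf{\Lambda}'=\mathrm{diag}(\lambda_1',\dots,\lambda_d')$ be the diagonal matrices of eigenvalues (in non-increasing order) of $\mathbf{\Sigma}(\mathbf{X})$ and $\mathbf{\Sigma}(\mathbf{X}')$ respectively. Then $$\|\mathbf{\Lambda}-\mathbf{\Lambda}'\|_F\le \frac{\sqrt{2}}{n}.$$
   Context: $\mathcal{B}_d$ denotes the closed unit $\ell_2$-ball in $\mathbb{R}^d$ centered at the origin. A dataset is a matrix $\mathbf{X}\in\mathbb{R}^{d\times n}$ whose columns $X_1,\dots,X_n$ are the individuals' vectors. Two datasets $\mathbf{X},\mathbf{X}'\in\mathbb{R}^{d\times n}$ are neighbors if they differ in exactly one column. The empirical covariance is $\mathbf{\Sigma}(\mathbf{X})=\frac1n\sum_i X_iX_i^T=\frac1n\mathbf{X}\mathbf{X}^T$. *)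

From HB Require Import structures.
From mathcomp Require Import all_boot all_order all_algebra.
From mathcomp Require Import reals.
Set Implicit Arguments. Unset Strict Implicit. Unset Printing Implicit Defensive.
Import Order.TTheory GRing.Theory Num.Theory.
Local Open Scope ring_scope.

Definition in_unit_ball {R : realType} {d : nat} (v : 'cV[R]_d) : Prop :=
  \sum_(i < d) (v i 0) ^+ 2 <= 1.

Definition cols_in_ball {R : realType} {d n : nat} (X : 'M[R]_(d, n)) : Prop :=
  forall j : 'I_n, in_unit_ball (col j X).

Definition neighbors {R : realType} {d n : nat} (X X' : 'M[R]_(d, n)) : Prop :=
  exists j : 'I_n, col j X != col j X' /\
    (forall k : 'I_n, k != j -> col k X = col k X').

Definition emp_cov {R : realType} {d n : nat} (X : 'M[R]_(d, n)) : 'M[R]_d :=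
  (n%:R)^-1 *: (X *m X^T).

Definition frob_norm {R : realType} {m n : nat} (A : 'M[R]_(m, n)) : R :=
  Num.sqrt (\sum_(i < m) \sum_(j < n) (A i j) ^+ 2).

Definition sorted_eigenvalues {R : realType} {d : nat} (A : 'M[R]_d)
    (lam : 'I_d -> R) : Prop :=
  char_poly A = \prod_(i < d) ('X - (lam i)%:P) /\
  (forall i j : 'I_d, (i <= j)%N -> lam j <= lam i).

From HB Require Import structures.
From mathcomp Require Import all_boot all_order all_algebra all_fingroup.
From mathcomp Require Import sesquilinear spectral ring lra reals.
From mathcomp.real_closed Require Import complex.
Set Implicit Arguments. Unset Strict Implicit. Unset Printing Implicit Defensive.
Import Order.TTheory GRing.Theory Num.Theory.
Local Open Scope ring_scope.

(* Both spectra are compared through the Hoffman-Wielandt inequality: for real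
   symmetric A, B with nonincreasing eigenvalues a, b,
   sum_i (a_i - b_i)^2 <= tr ((A - B)^2).  Diagonalizing A = P^* diag(a) P and
   B = Q^* diag(b) Q unitarily over the complex numbers gives
   tr (A B) = sum_ij a_i b_j |W_ij|^2 with W = P Q^* unitary, so (|W_ij|^2) is
   doubly stochastic; Abel summation in b reduces sum_ij a_i b_j S_ij <= sum_i a_i b_i
   to the fact that weights in [0, 1] of total mass l + 1 are best placed on the
   l + 1 largest a_i.  For neighbouring datasets n (Sigma(X) - Sigma(X')) = u u^T - v v^T
   with |u|, |v| <= 1, whose squared Frobenius norm |u|^4 + |v|^4 - 2 (u.v)^2 is at
   most 2. *)

Definition doubly_stochastic (C : numDomainType) d (S : 'M[C]_d) : Prop :=
  [/\ forall i j, 0 <= S i j, forall i, \sum_j S i j = 1 & forall j, \sum_i S i j = 1].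

Definition nonincreasing (C : numDomainType) d (a : 'I_d -> C) : Prop :=
  forall i j : 'I_d, (i <= j)%N -> a j <= a i.

Lemma sum_indicator_leq (C : pzSemiRingType) d (l : 'I_d) :
  \sum_(i < d) ((i <= l)%N%:R : C) = l.+1%:R.
Proof.
rewrite -natr_sum -(big_mkord xpredT (fun i => nat_of_bool (i <= l)%N)).
rewrite (big_cat_nat (n := l.+1)) //=.
have -> : (\sum_(l.+1 <= i < d) (i <= l) = 0)%N.
  by rewrite big_nat big1 // => i /andP[lt_li _]; rewrite leqNgt lt_li.
rewrite addn0 big_nat (eq_bigr (fun _ => 1%N)) -?big_nat ?sum1_size ?size_iota //.
by move=> i /andP[_]; rewrite ltnS => ->.
Qed.

Lemma telescope_indicator (C : pzRingType) (f : nat -> C) (m i : nat) :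
  (i <= m)%N -> f i = f m + \sum_(k < m) (f k - f k.+1) * (i <= k)%N%:R.
Proof.
elim: m => [|m IH]; first by rewrite leqn0 => /eqP->; rewrite big_ord0 addr0.
rewrite leq_eqVlt => /orP[/eqP->|lt_im].
  by rewrite big1 ?addr0 // => k _; rewrite leqNgt (ltn_ord k) mulr0.
rewrite ltnS in lt_im; rewrite big_ord_recr /= lt_im mulr1 (IH lt_im).
by rewrite [_ + (f m - _)]addrC addrA [f m.+1 + _]addrC subrK.
Qed.

Lemma weighted_sum_le_prefix (C : numDomainType) d (a c : 'I_d -> C) (l : 'I_d) :
  nonincreasing a -> (forall i, 0 <= c i <= 1) -> \sum_i c i = l.+1%:R ->
  \sum_i a i * c i <= \sum_i a i * (i <= l)%N%:R.
Proof.
move=> a_dec c01 sum_c; rewrite -subr_ge0 -sumrB.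
have -> : \sum_i (a i * (i <= l)%N%:R - a i * c i)
    = \sum_i (a i - a l) * ((i <= l)%N%:R - c i).
  under [RHS]eq_bigr do rewrite mulrBl.
  rewrite [RHS]sumrB -mulr_sumr [X in a l * X]sumrB sum_indicator_leq sum_c.
  rewrite subrr mulr0 subr0.
  by apply: eq_bigr => i _; rewrite mulrBr.
apply: sumr_ge0 => i _; have /andP[c0 c1] := c01 i.
case: (leqP i l) => [le_il|lt_li].
  by rewrite mulr_ge0 ?subr_ge0 ?a_dec.
by rewrite -mulrNN mulr_ge0 // opprB subr_ge0 ?(a_dec _ _ (ltnW lt_li)).
Qed.

Section Rearrangement.
Variable C : numDomainType.

Definition prefix_mass d (S : 'M[C]_d) (l : nat) (i : 'I_d) : C :=
  \sum_j S i j * (j <= l)%N%:R.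

Lemma prefix_mass_telescope m (a b : 'I_m.+1 -> C) (S : 'M[C]_m.+1) :
  (forall i, \sum_j S i j = 1) ->
  \sum_i \sum_j a i * b j * S i j
  = b (inord m) * \sum_i a i
    + \sum_(l < m) (b (inord l) - b (inord l.+1)) * \sum_i a i * prefix_mass S l i.
Proof.
move=> row1.
have b_tel j : b j = b (inord m) + \sum_(l < m) (b (inord l) - b (inord l.+1)) * (j <= l)%N%:R.
  by rewrite -(telescope_indicator (fun k => b (inord k))) ?inord_val // -ltnS.
have row_tel i : \sum_j b j * S i j
    = b (inord m) + \sum_(l < m) (b (inord l) - b (inord l.+1)) * prefix_mass S l i.
  under eq_bigr do rewrite b_tel mulrDl mulr_suml.
  rewrite big_split /= -mulr_sumr row1 mulr1 exchange_big /=; congr (_ + _).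
  by apply: eq_bigr => l _; rewrite mulr_sumr; apply: eq_bigr => j _; rewrite mulrA mulrAC.
transitivity (\sum_i a i * \sum_j b j * S i j).
  by apply: eq_bigr => i _; rewrite mulr_sumr; apply: eq_bigr => j _; rewrite mulrA.
under eq_bigr do rewrite row_tel mulrDr mulr_sumr.
rewrite big_split /= -mulr_suml mulrC exchange_big /=; congr (_ + _).
by apply: eq_bigr => l _; rewrite mulr_sumr; apply: eq_bigr => i _; rewrite mulrCA.
Qed.

Lemma prefix_mass1 d l (i : 'I_d) : prefix_mass 1%:M l i = (i <= l)%N%:R.
Proof.
rewrite /prefix_mass (bigD1 i) //= big1 ?addr0 => [|j /negbTE ji].
  by rewrite mxE eqxx mul1r.
by rewrite mxE eq_sym ji mul0r.
Qed.

Lemma prefix_mass_bounds d (S : 'M[C]_d) l i :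
  doubly_stochastic S -> 0 <= prefix_mass S l i <= 1.
Proof.
case=> S_ge0 row1 _; apply/andP; split.
  by apply: sumr_ge0 => j _; rewrite mulr_ge0 ?ler0n.
rewrite -(row1 i); apply: ler_sum => j _.
by case: (j <= l)%N; rewrite ?mulr1 ?mulr0.
Qed.

Lemma sum_prefix_mass d (S : 'M[C]_d) (l : 'I_d) :
  doubly_stochastic S -> \sum_i prefix_mass S l i = l.+1%:R.
Proof.
case=> _ _ col1; rewrite exchange_big /= -(sum_indicator_leq C l).
by apply: eq_bigr => j _; rewrite -mulr_suml col1 mul1r.
Qed.

Lemma doubly_stochastic_rearrangement d (a b : 'I_d -> C) (S : 'M[C]_d) :
  nonincreasing a -> nonincreasing b -> doubly_stochastic S ->
  \sum_i \sum_j a i * b j * S i j <= \sum_i a i * b i.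
Proof.
case: d a b S => [|m] a b S a_dec b_dec S_ds; first by rewrite !big_ord0.
have diag_sum : \sum_i a i * b i = \sum_i \sum_j a i * b j * (1%:M : 'M[C]_m.+1) i j.
  apply: eq_bigr => i _; rewrite (bigD1 i) //= big1 ?addr0 => [|j /negbTE ji].
    by rewrite mxE eqxx mulr1.
  by rewrite mxE eq_sym ji mulr0.
have [_ row1 _] := S_ds.
have id_row1 (i : 'I_m.+1) : \sum_j (1%:M : 'M[C]_m.+1) i j = 1.
  by rewrite (bigD1 i) //= big1 ?addr0 => [|j /negbTE ji]; rewrite mxE ?eqxx // eq_sym ji.
rewrite diag_sum !prefix_mass_telescope // lerD2l; apply: ler_sum => l _.
apply: ler_wpM2l; first by rewrite subr_ge0 b_dec // !inordK // ltnS // ltnW.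
have lt_lm : (l < m.+1)%N by rewrite ltnS ltnW.
under [X in _ <= X]eq_bigr do rewrite prefix_mass1.
apply: (weighted_sum_le_prefix (l := Ordinal lt_lm)) => // [i|].
  exact: prefix_mass_bounds.
exact: (sum_prefix_mass (Ordinal lt_lm)).
Qed.

Lemma doubly_stochastic_perm d (S : 'M[C]_d) (s t : 'S_d) :
  doubly_stochastic S -> doubly_stochastic (\matrix_(i, j) S (s i) (t j)).
Proof.
case=> S_ge0 row1 col1; split=> [i j|i|j]; rewrite ?mxE //.
  by rewrite (reindex_inj (@perm_inj _ t^-1)) /=; under eq_bigr do rewrite mxE permKV.
by rewrite (reindex_inj (@perm_inj _ s^-1)) /=; under eq_bigr do rewrite mxE permKV.
Qed.

End Rearrangement.

Lemma char_poly_similar (F : fieldType) d (P M : 'M[F]_d) : P \in unitmx ->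
  char_poly (invmx P *m M *m P) = char_poly M.
Proof.
move=> P_unit; rewrite /char_poly; pose f := @map_mx F {poly F} polyC d d.
have fPV : f (invmx P) *m f P = 1%:M by rewrite -map_mxM mulVmx // map_mx1.
have -> : char_poly_mx (invmx P *m M *m P) = f (invmx P) *m char_poly_mx M *m f P.
  rewrite /char_poly_mx mulmxBr mulmxBl !map_mxM; congr (_ - _).
  by rewrite mul_mx_scalar -scalemxAl fPV scalemx1.
by rewrite !det_mulmx mulrAC -det_mulmx fPV det1 mul1r.
Qed.

Lemma char_poly_diag (R : comNzRingType) d (D : 'rV[R]_d) :
  char_poly (diag_mx D) = \prod_i ('X - (D 0 i)%:P).
Proof.
rewrite char_poly_trig ?diag_mx_is_trig //.
by apply: eq_bigr => i _; rewrite mxE eqxx mulr1n.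
Qed.

Lemma prod_XsubC_perm (F : fieldType) d (a b : 'I_d -> F) :
  \prod_i ('X - (a i)%:P) = \prod_i ('X - (b i)%:P) ->
  exists s : 'S_d, forall i, b i = a (s i).
Proof.
move=> eq_ab; have : perm_eq [tuple b i | i < d] [tuple a i | i < d].
  by apply: prod_XsubC_eq; rewrite /= !big_map; apply: esym.
case/tuple_permP=> s eq_bs; exists s => i.
by have := congr1 (fun t => tnth t i) (val_inj eq_bs); rewrite !tnth_mktuple.
Qed.

Section NormalMatrices.
Variable C : numClosedFieldType.
Local Open Scope sesquilinear_scope.

Lemma normalmx_spectral_perm d (A : 'M[C]_d) (a : 'I_d -> C) :
  A \is normalmx -> char_poly A = \prod_i ('X - (a i)%:P) ->
  exists (P : 'M[C]_d) (s : 'S_d),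
    P \is unitarymx /\ A = P^t* *m diag_mx (\row_i a (s i)) *m P.
Proof.
move=> /orthomx_spectralP A_spec A_char.
have : char_poly A = \prod_i ('X - (spectral_diag A 0 i)%:P).
  by rewrite {1}A_spec char_poly_similar ?char_poly_diag // spectral_unit.
rewrite A_char => /prod_XsubC_perm [s eq_s].
exists (spectralmx A), s; split; first exact: spectral_unitarymx.
rewrite {1}A_spec invmx_unitary ?spectral_unitarymx //; congr (_ *m diag_mx _ *m _).
by apply/rowP => i; rewrite mxE eq_s.
Qed.

Lemma mxtrace_mul_unitary_diag d (P Q : 'M[C]_d) (D E : 'rV[C]_d) :
  \tr ((P^t* *m diag_mx D *m P) *m (Q^t* *m diag_mx E *m Q)) =
  \sum_i \sum_j D 0 i * E 0 j * ((P *m Q^t*) i j * ((P *m Q^t*) i j)^*).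
Proof.
set W := P *m Q^t*; have W_adj : W^t* = Q *m P^t* by rewrite trmx_mul map_mxM trmxCK.
rewrite -!mulmxA mxtrace_mulC !mulmxA.
have -> : diag_mx D *m P *m Q^t* *m diag_mx E *m Q *m P^t*
    = diag_mx D *m W *m diag_mx E *m W^t* by rewrite W_adj /W !mulmxA.
apply: eq_bigr => i _; rewrite mxE; apply: eq_bigr => j _.
by rewrite mul_mx_diag mul_diag_mx !mxE; ring.
Qed.

Lemma unitarymx_doubly_stochastic d (W : 'M[C]_d) : W \is unitarymx ->
  doubly_stochastic (\matrix_(i, j) (W i j * (W i j)^* )).
Proof.
move=> W_unitary; split=> [i j|i|j]; rewrite ?mxE ?mul_conjC_ge0 //.
  have /unitarymxP/(congr1 (fun M : 'M[C]_d => M i i)) := W_unitary.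
  by rewrite !mxE eqxx mulr1n => <-; apply: eq_bigr => j _; rewrite !mxE.
rewrite -trmxC_unitary in W_unitary.
have /unitarymxP/(congr1 (fun M : 'M[C]_d => M j j)) := W_unitary.
by rewrite trmxCK !mxE eqxx mulr1n => <-; apply: eq_bigr => i _; rewrite !mxE mulrC.
Qed.

Lemma normalmx_mxtrace_mul_le d (A B : 'M[C]_d) (a b : 'I_d -> C) :
  A \is normalmx -> B \is normalmx ->
  char_poly A = \prod_i ('X - (a i)%:P) -> char_poly B = \prod_i ('X - (b i)%:P) ->
  nonincreasing a -> nonincreasing b ->
  \tr (A *m B) <= \sum_i a i * b i.
Proof.
move=> A_normal B_normal A_char B_char a_dec b_dec.
have [P [s [P_unitary ->]]] := normalmx_spectral_perm A_normal A_char.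
have [Q [t [Q_unitary ->]]] := normalmx_spectral_perm B_normal B_char.
rewrite mxtrace_mul_unitary_diag.
set W := P *m Q^t*; set S := \matrix_(i, j) (W i j * (W i j)^* ).
have S_ds : doubly_stochastic S.
  by apply/unitarymx_doubly_stochastic; rewrite mul_unitarymx ?trmxC_unitary.
have -> : \sum_i \sum_j (\row_k a (s k)) 0 i * (\row_k b (t k)) 0 j * (W i j * (W i j)^* )
    = \sum_i \sum_j a i * b j * (\matrix_(i, j) S ((s^-1)%g i) ((t^-1)%g j)) i j.
  rewrite [RHS](reindex_inj (@perm_inj _ s)); apply: eq_bigr => i _.
  rewrite [RHS](reindex_inj (@perm_inj _ t)); apply: eq_bigr => j _.
  by rewrite !mxE !permK.
exact/doubly_stochastic_rearrangement/doubly_stochastic_perm.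
Qed.

Lemma normalmx_mxtrace_sqr d (A : 'M[C]_d) (a : 'I_d -> C) :
  A \is normalmx -> char_poly A = \prod_i ('X - (a i)%:P) ->
  \tr (A *m A) = \sum_i a i * a i.
Proof.
move=> A_normal A_char.
have [P [s [/unitarymxP P_unitary ->]]] := normalmx_spectral_perm A_normal A_char.
rewrite mxtrace_mul_unitary_diag P_unitary [RHS](reindex_inj (@perm_inj _ s)).
apply: eq_bigr => i _; rewrite (bigD1 i) //= big1 ?addr0 => [|j /negbTE ji].
  by rewrite !mxE eqxx conjC1 !mulr1.
by rewrite !mxE eq_sym ji conjC0 !mulr0.
Qed.

End NormalMatrices.

Section SymmetricMatrices.
Variables (R : rcfType) (d : nat).
Local Notation toC := (real_complex R).

Lemma symmetric_complex_normalmx (A : 'M[R]_d) : A^T = A -> map_mx toC A \is normalmx.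
Proof.
move=> A_sym; apply/hermitian_normalmx/realsym_hermsym.
  by rewrite is_hermitianmxE expr0 scale1r map_mx_id // map_trmx A_sym.
by apply/mxOverP => i j; apply/complex_realP; exists (A i j); rewrite mxE.
Qed.

Lemma char_poly_complex (A : 'M[R]_d) (a : 'I_d -> R) :
  char_poly A = \prod_i ('X - (a i)%:P) ->
  char_poly (map_mx toC A) = \prod_i ('X - (toC (a i))%:P).
Proof. by move=> A_char; rewrite -map_char_poly A_char map_prod_XsubC. Qed.

Lemma nonincreasing_complex (a : 'I_d -> R) :
  nonincreasing a -> nonincreasing (toC \o a).
Proof. by move=> a_dec i j le_ij; rewrite /= lecR a_dec. Qed.

Lemma mxtrace_complex (A B : 'M[R]_d) :
  \tr (map_mx toC A *m map_mx toC B) = toC (\tr (A *m B)).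
Proof. by rewrite -map_mxM trace_map_mx. Qed.

Lemma symmetric_mxtrace_mul_le (A B : 'M[R]_d) (a b : 'I_d -> R) :
  A^T = A -> B^T = B ->
  char_poly A = \prod_i ('X - (a i)%:P) -> char_poly B = \prod_i ('X - (b i)%:P) ->
  nonincreasing a -> nonincreasing b ->
  \tr (A *m B) <= \sum_i a i * b i.
Proof.
move=> A_sym B_sym A_char B_char a_dec b_dec.
have := normalmx_mxtrace_mul_le (symmetric_complex_normalmx A_sym)
  (symmetric_complex_normalmx B_sym) (char_poly_complex A_char) (char_poly_complex B_char)
  (nonincreasing_complex a_dec) (nonincreasing_complex b_dec).
by rewrite mxtrace_complex -(eq_bigr _ (fun i _ => rmorphM _ _ _)) -rmorph_sum lecR.
Qed.

Lemma symmetric_mxtrace_sqr (A : 'M[R]_d) (a : 'I_d -> R) :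
  A^T = A -> char_poly A = \prod_i ('X - (a i)%:P) ->
  \tr (A *m A) = \sum_i a i * a i.
Proof.
move=> A_sym A_char.
have := normalmx_mxtrace_sqr (symmetric_complex_normalmx A_sym) (char_poly_complex A_char).
rewrite mxtrace_complex -(eq_bigr _ (fun i _ => rmorphM _ _ _)) -rmorph_sum.
exact: complexI.
Qed.

Lemma hoffman_wielandt_symmetric (A B : 'M[R]_d) (a b : 'I_d -> R) :
  A^T = A -> B^T = B ->
  char_poly A = \prod_i ('X - (a i)%:P) -> char_poly B = \prod_i ('X - (b i)%:P) ->
  nonincreasing a -> nonincreasing b ->
  \sum_i (a i - b i) ^+ 2 <= \tr ((A - B) *m (A - B)).
Proof.
move=> A_sym B_sym A_char B_char a_dec b_dec.
have -> : \tr ((A - B) *m (A - B)) = \tr (A *m A) + \tr (B *m B) - 2 * \tr (A *m B).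
  rewrite mulmxBl !mulmxBr !linearB /= [\tr (B *m A)]mxtrace_mulC; lra.
have -> : \sum_i (a i - b i) ^+ 2
    = \sum_i a i * a i + \sum_i b i * b i - 2 * \sum_i a i * b i.
  rewrite (eq_bigr (fun i => a i * a i + b i * b i - 2 * (a i * b i))) => [|i _].
    by rewrite sumrB big_split mulr_sumr.
  by ring.
rewrite (symmetric_mxtrace_sqr A_sym A_char) (symmetric_mxtrace_sqr B_sym B_char).
by rewrite lerD2l lerN2 ler_wpM2l ?ler0n ?symmetric_mxtrace_mul_le.
Qed.

End SymmetricMatrices.

Lemma mxtrace_sqr_outer_diff (R : comNzRingType) d (u v : 'cV[R]_d) :
  \tr ((u *m u^T - v *m v^T) *m (u *m u^T - v *m v^T)) =
    (\sum_i u i 0 ^+ 2) ^+ 2 + (\sum_i v i 0 ^+ 2) ^+ 2 - 2 * (\sum_i u i 0 * v i 0) ^+ 2.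
Proof.
set N := u *m u^T - v *m v^T.
have N_entry a b : N a b = u a 0 * u b 0 - v a 0 * v b 0.
  by rewrite !mxE !big_ord1 !mxE.
rewrite /mxtrace (eq_bigr (fun a => \sum_b (u a 0 ^+ 2 * u b 0 ^+ 2
  + v a 0 ^+ 2 * v b 0 ^+ 2 - 2 * (u a 0 * v a 0) * (u b 0 * v b 0)))) => [|a _].
  under eq_bigr do rewrite sumrB big_split /= -!mulr_sumr.
  rewrite sumrB big_split /= -!mulr_suml -mulr_sumr; ring.
by rewrite mxE; apply: eq_bigr => b _; rewrite !N_entry; ring.
Qed.

Lemma mxtrace_sqr_outer_diff_le (R : realDomainType) d (u v : 'cV[R]_d) :
  \sum_i u i 0 ^+ 2 <= 1 -> \sum_i v i 0 ^+ 2 <= 1 ->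
  \tr ((u *m u^T - v *m v^T) *m (u *m u^T - v *m v^T)) <= 2.
Proof.
move=> u_le1 v_le1; rewrite mxtrace_sqr_outer_diff.
have u_ge0 : 0 <= \sum_i u i 0 ^+ 2 by apply: sumr_ge0 => i _; apply: sqr_ge0.
have v_ge0 : 0 <= \sum_i v i 0 ^+ 2 by apply: sumr_ge0 => i _; apply: sqr_ge0.
have := sqr_ge0 (\sum_i u i 0 * v i 0); nra.
Qed.

Lemma gram_diff_neighbors (R : comNzRingType) d n (X X' : 'M[R]_(d, n)) (j : 'I_n) :
  (forall k, k != j -> col k X = col k X') ->
  X *m X^T - X' *m X'^T = col j X *m (col j X)^T - col j X' *m (col j X')^T.
Proof.
move=> eq_off_j; apply/matrixP => a b; rewrite !mxE !big_ord1 !mxE.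
rewrite (bigD1 j) //= [X in _ - X](bigD1 j) //= !mxE opprD addrACA.
suff -> : \sum_(k < n | k != j) X a k * X^T k b = \sum_(k < n | k != j) X' a k * X'^T k b.
  by rewrite subrr addr0.
apply: eq_bigr => k /eq_off_j /matrixP eq_k.
by have := eq_k a 0; have := eq_k b 0; rewrite !mxE => -> ->.
Qed.

Lemma frob_norm_diag (R : realType) d (D : 'rV[R]_d) :
  frob_norm (diag_mx D) = Num.sqrt (\sum_i D 0 i ^+ 2).
Proof.
congr Num.sqrt; apply: eq_bigr => i _; rewrite (bigD1 i) //= big1 ?addr0.
  by rewrite mxE eqxx mulr1n.
by move=> k /negbTE ki; rewrite mxE eq_sym ki mulr0n expr0n.
Qed.

Lemma emp_cov_sym (R : realType) d n (X : 'M[R]_(d, n)) : (emp_cov X)^T = emp_cov X.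
Proof. by rewrite /emp_cov linearZ /= trmx_mul trmxK. Qed.

Lemma emp_cov_diff_sqr_le (R : realType) d n (X X' : 'M[R]_(d, n)) :
  cols_in_ball X -> cols_in_ball X' -> neighbors X X' ->
  \tr ((emp_cov X - emp_cov X') *m (emp_cov X - emp_cov X')) <= 2 / n%:R ^+ 2.
Proof.
move=> X_ball X'_ball [j [_ eq_off_j]].
rewrite /emp_cov -scalerBr (gram_diff_neighbors eq_off_j) -scalemxAl -scalemxAr.
rewrite !mxtraceZ mulrA -expr2 exprVn mulrC ler_wpM2r ?invr_ge0 ?exprn_ge0 //.
exact: mxtrace_sqr_outer_diff_le (X_ball j) (X'_ball j).
Qed.

Theorem mainTheorem1 (R : realType) (d n : nat) (hd : (0 < d)%N) (hn : (0 < n)%N)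
    (X X' : 'M[R]_(d, n)) (lam lam' : 'I_d -> R) :
  cols_in_ball X -> cols_in_ball X' -> neighbors X X' ->
  sorted_eigenvalues (emp_cov X) lam ->
  sorted_eigenvalues (emp_cov X') lam' ->
  frob_norm (diag_mx (\row_i lam i) - diag_mx (\row_i lam' i))
    <= Num.sqrt 2 / n%:R.
Proof.
move=> X_ball X'_ball nbr [X_char lam_dec] [X'_char lam'_dec].
have -> : Num.sqrt 2 / n%:R = Num.sqrt (2 / n%:R ^+ 2) :> R.
  by rewrite sqrtrM ?sqrtrV ?exprn_ge0 ?sqrtr_sqr ?ger0_norm ?ler0n.
rewrite -linearB frob_norm_diag ler_sqrt ?divr_ge0 ?exprn_ge0 ?ler0n //.
under eq_bigr do rewrite !mxE.
apply: le_trans (emp_cov_diff_sqr_le X_ball X'_ball nbr).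
exact: hoffman_wielandt_symmetric (emp_cov_sym X) (emp_cov_sym X') X_char X'_char lam_dec lam'_dec.
Qed.
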